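(* Let $L$ be a positive integer and let $(\mathbf{F},\mathbf{G})$ be an eigencomplementary pair of matrices $\mathbf{F},\mathbf{G}\in\mathbb{R}^{L\times L}$ which are both singular. If $\mathbf{u},\mathbf{w}\in\mathbb{R}^L$ satisfy $\mathbf{G}\mathbf{u}=\mathbf{F}\mathbf{w}$, then $\mathbf{u}^\top\mathbf{w}=0$.
   Context: A pair $(\mathbf{F},\mathbf{G})$ of real symmetric $L\times L$ matrices is called eigencomplementary if $\mathbf{F}$ is negative semi-definite, $\mathbf{G}$ is positive semi-definite, $\mathbf{F}$ and $\mathbf{G}$ have a common basis of eigenvectors of $\mathbb{R}^L$, and, in the case that $\mathbf{F}$ and $\mathbf{G}$ are both singular, additionally $\bigoplus_{\xi\in\sigma(\mathbf{F}),\,\xi<0}\operatorname{Eig}_{\mathbf{F}}(\xi)=\operatorname{Eig}_{\mathbf{G}}(0)$, where $\sigma(\cdot)$ denotes the spectrum and $\operatorname{Eig}_{\mathbf{M}}(\xi)$ the eigenspace of $\mathbf{M}$ for the eigenvalue $\xi$. *)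

From mathcomp Require Import all_boot all_order all_algebra.
From mathcomp Require Import reals.
Set Implicit Arguments. Unset Strict Implicit. Unset Printing Implicit Defensive.
Import Order.TTheory GRing.Theory Num.Theory.
Local Open Scope ring_scope.

Section Eigencomp.
Variables (R : realType) (L : nat).

Definition symmetricmx (M : 'M[R]_L) : Prop := M^T = M.

Definition nsd (M : 'M[R]_L) : Prop :=
  forall v : 'cV[R]_L, (v^T *m M *m v) 0 0 <= 0.

Definition psd (M : 'M[R]_L) : Prop :=
  forall v : 'cV[R]_L, 0 <= (v^T *m M *m v) 0 0.

Definition in_spectrum (M : 'M[R]_L) (xi : R) : Prop :=
  exists v : 'cV[R]_L, v != 0 /\ M *m v = xi *: v.

Definition in_eigenspace (M : 'M[R]_L) (xi : R) (v : 'cV[R]_L) : Prop :=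
  M *m v = xi *: v.

Definition common_eigenbasis (F G : 'M[R]_L) : Prop :=
  exists P : 'M[R]_L, P \in unitmx /\
    forall j : 'I_L, exists a b : R,
      F *m col j P = a *: col j P /\ G *m col j P = b *: col j P.

(* v belongs to the (direct) sum of the eigenspaces Eig_F(xi), xi in sigma(F),
   xi < 0 : v is a finite sum of eigenvectors for negative eigenvalues. *)
Definition in_neg_eigensum (F : 'M[R]_L) (v : 'cV[R]_L) : Prop :=
  exists (s : seq R) (w : R -> 'cV[R]_L),
    (forall xi, xi \in s -> in_spectrum F xi /\ xi < 0 /\ in_eigenspace F xi (w xi))
    /\ v = \sum_(xi <- s) w xi.

Definition singularmx (M : 'M[R]_L) : Prop := \det M = 0.

Definition eigencomplementary (F G : 'M[R]_L) : Prop :=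
  symmetricmx F /\ symmetricmx G /\ nsd F /\ psd G /\
  common_eigenbasis F G /\
  (singularmx F /\ singularmx G ->
    forall v : 'cV[R]_L, in_neg_eigensum F v <-> in_eigenspace G 0 v).

End Eigencomp.

From Pilot Require Import Defs.
From mathcomp Require Import all_boot all_order all_algebra.
From mathcomp Require Import reals.
Set Implicit Arguments. Unset Strict Implicit. Unset Printing Implicit Defensive.
Import Order.TTheory GRing.Theory Num.Theory.
Local Open Scope ring_scope.

(* Every common eigenvector v of F and G is killed by F G: either F v = 0, or
   its F-eigenvalue is negative (it cannot be positive since F is negative
   semi-definite), and then v lies in the negative eigensum of F, which is
   Eig_G(0).  Hence F G = 0.  From G u = F w we get F (F w) = F G u = 0, so
   |F w|^2 = w^T F^2 w = 0 and G u = F w = 0.  Thus u is in Eig_G(0), i.e. a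
   sum of eigenvectors of the symmetric F for nonzero eigenvalues, each of
   which is orthogonal to the kernel of F, and w lies in that kernel. *)

Lemma trmx_mul_self_eq0 (R : realDomainType) n (v : 'cV[R]_n) :
  ((v^T *m v) 0 0 == 0) = (v == 0).
Proof.
rewrite mxE psumr_eq0 => [|i _]; last by rewrite !mxE -expr2 sqr_ge0.
apply/allP/eqP => [v0|-> i _]; last by rewrite trmx0 !mxE mul0r eqxx.
apply/matrixP => i j; rewrite (ord1 j) mxE; apply/eqP.
by have := v0 i (mem_index_enum i); rewrite mxE -expr2 sqrf_eq0.
Qed.

Lemma trmx_mul_self_gt0 (R : realDomainType) n (v : 'cV[R]_n) :
  v != 0 -> 0 < (v^T *m v) 0 0.
Proof.
rewrite -trmx_mul_self_eq0 lt_def => ->; rewrite mxE sumr_ge0 // => i _.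
by rewrite mxE -expr2 sqr_ge0.
Qed.

Lemma unitmx_col_neq0 (R : comUnitRingType) n (P : 'M[R]_n) (j : 'I_n) :
  P \in unitmx -> col j P != 0.
Proof.
move=> Pu; apply/eqP; rewrite colE => Pe0.
have /matrixP/(_ j 0) : delta_mx j 0 = 0 :> 'cV[R]_n.
  by rewrite -(mulKmx Pu (delta_mx j 0)) Pe0 mulmx0.
by rewrite !mxE !eqxx => /eqP; rewrite oner_eq0.
Qed.

Lemma mulmx_cols_eq0 (R : pzSemiRingType) m n p
    (A : 'M[R]_(m, n)) (P : 'M[R]_(n, p)) :
  (forall j, A *m col j P = 0) -> A *m P = 0.
Proof.
move=> AP0; apply/matrixP => i j.
by have /matrixP/(_ i 0) := AP0 j; rewrite colE mulmxA -colE !mxE.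
Qed.

Lemma symmetric_sqr_mulmx_eq0 (R : realDomainType) n
    (F : 'M[R]_n) (w : 'cV[R]_n) :
  F^T = F -> F *m (F *m w) = 0 -> F *m w = 0.
Proof.
move=> sF FFw0; apply/eqP; rewrite -trmx_mul_self_eq0.
by rewrite trmx_mul sF -mulmxA FFw0 mulmx0 mxE.
Qed.

(* Self-adjointness: xi (v^T x) = (F v)^T x = v^T (F x) = 0. *)
Lemma symmetric_eigenvector_orthogonal_kernel (R : idomainType) n (F : 'M[R]_n)
    (v x : 'cV[R]_n) (xi : R) :
  F^T = F -> xi != 0 -> F *m v = xi *: v -> F *m x = 0 -> (v^T *m x) 0 0 = 0.
Proof.
move=> sF xi0 Fv Fx0.
have : xi *: (v^T *m x) = 0.
  by rewrite scalemxAl -linearZ /= -Fv trmx_mul sF -mulmxA Fx0 mulmx0.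
by move/matrixP/(_ 0 0)/eqP; rewrite !mxE mulf_eq0 (negbTE xi0) => /eqP.
Qed.

Section Eigencomplementary.
Variables (R : realType) (n : nat).

Lemma nsd_eigenvalue_le0 (F : 'M[R]_n) (v : 'cV[R]_n) (a : R) :
  nsd F -> v != 0 -> F *m v = a *: v -> a <= 0.
Proof.
move=> nF v0 Fv; have := nF v.
rewrite -mulmxA Fv -scalemxAr mxE mulrC.
by rewrite (pmulr_rle0 _ (trmx_mul_self_gt0 v0)).
Qed.

Lemma eigenvector_in_neg_eigensum (F : 'M[R]_n) (v : 'cV[R]_n) (a : R) :
  v != 0 -> F *m v = a *: v -> a < 0 -> in_neg_eigensum F v.
Proof.
move=> v0 Fv a_lt0; exists [:: a], (fun=> v); split; last by rewrite big_seq1.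
by move=> xi; rewrite inE => /eqP ->; split; first by exists v.
Qed.

Lemma neg_eigensum_orthogonal_kernel (F : 'M[R]_n) (v x : 'cV[R]_n) :
  Defs.symmetricmx F -> in_neg_eigensum F v -> F *m x = 0 ->
  (v^T *m x) 0 0 = 0.
Proof.
move=> sF [s [vs [vsE ->]]] Fx0.
rewrite linear_sum mulmx_suml summxE big1_seq // => xi /andP[_ xi_s].
have [_ [xi_lt0 Fvs]] := vsE xi xi_s.
exact: symmetric_eigenvector_orthogonal_kernel sF (ltr0_neq0 xi_lt0) Fvs Fx0.
Qed.

Lemma eigencomplementary_mul_eq0 (F G : 'M[R]_n) :
  nsd F -> common_eigenbasis F G ->
  (forall v, in_neg_eigensum F v -> in_eigenspace G 0 v) -> F *m G = 0.
Proof.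
move=> nF [P [Pu PE]] negG0; apply: (can_inj (mulmxK Pu)); rewrite mul0mx.
apply: mulmx_cols_eq0 => j; have P0 := unitmx_col_neq0 j Pu.
have [a [b [Fv Gv]]] := PE j; rewrite -mulmxA.
have [a_lt0|a_ge0] := ltP a 0.
  have /negG0 := eigenvector_in_neg_eigensum P0 Fv a_lt0.
  by rewrite /in_eigenspace scale0r => ->; rewrite mulmx0.
have a0 : a = 0 by apply/eqP; rewrite eq_le a_ge0 (nsd_eigenvalue_le0 nF P0 Fv).
by rewrite Gv -scalemxAr Fv a0 !scale0r scaler0.
Qed.

End Eigencomplementary.

Theorem lemma2p6 (R : realType) (L : nat) (F G : 'M[R]_L)
  (u w : 'cV[R]_L) :
  (0 < L)%N ->
  eigencomplementary F G ->
  singularmx F -> singularmx G ->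
  G *m u = F *m w ->
  (u^T *m w) 0 0 = 0.
Proof.
move=> _ [sF [_ [nF [_ [eigFG negG0]]]]] sgF sgG Gu_Fw.
have {}negG0 := negG0 (conj sgF sgG).
have FG0 : F *m G = 0.
  by apply: eigencomplementary_mul_eq0 => // v /negG0.
have Fw0 : F *m w = 0.
  by apply: symmetric_sqr_mulmx_eq0 => //; rewrite -Gu_Fw mulmxA FG0 mul0mx.
have Gu0 : in_eigenspace G 0 u by rewrite /in_eigenspace scale0r Gu_Fw.
exact: (neg_eigensum_orthogonal_kernel sF (proj2 (negG0 u) Gu0) Fw0).
Qed.
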